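(* Let $G$ be an extremal uniformly $3$-connected graph on $n=3k+\ell\ge 5$ vertices, where $k\in\mathbb{N}\setminus\{1\}$ and $\ell\in\{-1,0,1\}$. Consider a construction of $G$ from complete graphs on four vertices using $j$ bridge operations, $t$ edge joins, $p$ primary spoke operations and $s$ secondary spoke operations. Then: (1) $p=k-1$; (2) if $\ell=-1$, then $j=k-2$ and $t=s=0$; (3) if $\ell=0$, then $j=k-2$, $t=0$, $s=1$; (4) if $\ell=1$, then either $j=k-1$ and $t=s=0$, or $j=k-2$, $t=1$, $s=0$, or $j=k-2$, $t=0$, $s=2$.
   Context: All graphs are finite and simple. A graph on at least $k+1$ vertices is uniformly $k$-connected if each pair of its vertices is connected by $k$ and not more than $k$ independent paths. For a graph $G$, $\nu(G)$ is the number of vertices of $G$ whose degree equals the minimum degree of $G$. Every uniformly $3$-connected graph $G$ on $n$ vertices satisfies $\nu(G)\ge\lceil(2n+2)/3\rceil$; $G$ is called extremal if equality holds. Operations. (1) Edge join: for a graph $H$ and two distinct edges $st, vw\in E(H)$ (which may share one endvertex), form $H + x + y - st - vw + sx + xt + vy + yw + xy$ with new vertices $x,y$; every $3$-regular $3$-connected graph arises from $K_4$ by edge joins, and edge joins are applied to $3$-regular $3$-connected graphs. (2) Bridge operation: for vertex-disjoint graphs $G_1,G_2$ with $v_1\in V(G_1)$, $v_2\in V(G_2)$, $N(v_1)=\{x_1,y_1,z_1\}$, $N(v_2)=\{x_2,y_2,z_2\}$, form $(G_1-v_1)\cup(G_2-v_2)+x_1x_2+y_1y_2+z_1z_2$.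 (3) Spoke operation: for a graph $H$ with distinct vertices $v,w,x$ with $vw\in E(H)$ and $\deg(z)=3$ for all $z\in V(H)\setminus\{x\}$, form $H+y-vw+vy+wy+xy$ with a new vertex $y$; it is primary if $\deg(x)=3$ and secondary if $\deg(x)>3$. It is known that a graph is uniformly $3$-connected if and only if it belongs to the smallest class containing all $3$-regular $3$-connected graphs and closed under bridge operations and spoke operations; thus each uniformly $3$-connected graph can be constructed from copies of $K_4$ by these operations. *)

From mathcomp Require Import all_boot all_order all_algebra.
Set Implicit Arguments. Unset Strict Implicit. Unset Printing Implicit Defensive.

Record sgraph := SGraph {
  gn : nat;
  gadj : rel 'I_gn;
  gsym : symmetric gadj;
  girr : irreflexive gadj }.
Arguments gadj : clear implicits.

Definition vert (G : sgraph) := 'I_(gn G).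

Definition deg (G : sgraph) (v : vert G) : nat := #|[set w | gadj G v w]|.

Definition nu (G : sgraph) : nat :=
  #|[set v : vert G | [forall w : vert G, deg v <= deg w]]|.

(* A u-v path, given by the list q of vertices after u (so the path is u :: q). *)
Definition is_uv_path (G : sgraph) (u v : vert G) (q : seq (vert G)) : bool :=
  [&& path (gadj G) u q, last u q == v & uniq (u :: q)].

Definition indep_paths (G : sgraph) (m : nat) (u v : vert G) : Prop :=
  exists P : 'I_m -> seq (vert G),
    (forall i, is_uv_path u v (P i)) /\
    (forall i j, i != j ->
       P i != P j /\ (forall x, x \in P i -> x \in P j -> x = v)).

Definition uniformly_connected (k : nat) (G : sgraph) : Prop :=
  k.+1 <= gn G /\
  forall u v : vert G, u != v -> indep_paths k u v /\ ~ indep_paths k.+1 u v.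

Definition k_connected (k : nat) (G : sgraph) : Prop :=
  k < gn G /\
  forall S : {set vert G}, #|S| < k ->
    forall u v : vert G, u \notin S -> v \notin S ->
      exists q, is_uv_path u v q /\ all (fun x => x \notin S) q.

Definition cubic (G : sgraph) : Prop := forall v : vert G, deg v = 3.

Definition complete4 (G : sgraph) : Prop :=
  gn G = 4 /\ forall u v : vert G, u != v -> gadj G u v.

Definition same_edge (T : eqType) (a b c d : T) : bool :=
  ((a == c) && (b == d)) || ((a == d) && (b == c)).

(* G = H + x + y - st - vw + sx + xt + vy + yw + xy  (up to isomorphism:
   f embeds H into G, and x, y are the two new vertices). *)
Definition edge_join (H G : sgraph) : Prop :=
  exists s t v w : vert H,
    [/\ gadj H s t, gadj H v w, ~~ same_edge s t v w & gn G = gn H + 2] /\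
    exists (f : vert H -> vert G) (x y : vert G),
      [/\ injective f, x != y, (forall a, f a != x /\ f a != y) &
          (forall a b, gadj G (f a) (f b) =
                       [&& gadj H a b, ~~ same_edge a b s t & ~~ same_edge a b v w])] /\
      [/\ (forall a, gadj G x (f a) = (a == s) || (a == t)),
          (forall a, gadj G y (f a) = (a == v) || (a == w)) &
          gadj G x y].

(* Bridge operation: G = (G1 - v1) u (G2 - v2) + x1x2 + y1y2 + z1z2 where
   N(v1) = {x1,y1,z1}, N(v2) = {x2,y2,z2} (up to isomorphism: f1, f2 embed
   G1 - v1 and G2 - v2 into G with disjoint images covering G). *)
Definition bridge (G1 G2 G : sgraph) : Prop :=
  exists (v1 x1 y1 z1 : vert G1) (v2 x2 y2 z2 : vert G2),
    [/\ uniq [:: x1; y1; z1], (forall a, gadj G1 v1 a = (a \in [:: x1; y1; z1])),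
        uniq [:: x2; y2; z2], (forall b, gadj G2 v2 b = (b \in [:: x2; y2; z2])) &
        gn G + 2 = gn G1 + gn G2] /\
    exists (f1 : vert G1 -> vert G) (f2 : vert G2 -> vert G),
      [/\ (forall a a', a != v1 -> a' != v1 -> f1 a = f1 a' -> a = a'),
          (forall b b', b != v2 -> b' != v2 -> f2 b = f2 b' -> b = b') &
          (forall a b, a != v1 -> b != v2 -> f1 a != f2 b)] /\
      [/\ (forall a a', a != v1 -> a' != v1 -> gadj G (f1 a) (f1 a') = gadj G1 a a'),
          (forall b b', b != v2 -> b' != v2 -> gadj G (f2 b) (f2 b') = gadj G2 b b') &
          (forall a b, a != v1 -> b != v2 ->
             gadj G (f1 a) (f2 b) =
             [|| (a == x1) && (b == x2), (a == y1) && (b == y2)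
               | (a == z1) && (b == z2)])].

(* Spoke operation: G = H + y - vw + vy + wy + xy, where deg z = 3 for all
   z <> x; primary if deg x = 3, secondary if deg x > 3. *)
Definition spoke (primary : bool) (H G : sgraph) : Prop :=
  exists v w x : vert H,
    [/\ uniq [:: v; w; x], gadj H v w, (forall z, z != x -> deg z = 3),
        (if primary then deg x == 3 else 3 < deg x) & gn G = gn H + 1] /\
    exists (f : vert H -> vert G) (y : vert G),
      [/\ injective f, (forall a, f a != y),
          (forall a b, gadj G (f a) (f b) = gadj H a b && ~~ same_edge a b v w) &
          (forall a, gadj G y (f a) = (a \in [:: v; w; x]))].

Inductive construction : sgraph -> nat -> nat -> nat -> nat -> Prop :=
| cK4 G : complete4 G -> construction G 0 0 0 0
| cEJ H G j t p s : construction H j t p s -> cubic H -> k_connected 3 H ->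
    edge_join H G -> construction G j t.+1 p s
| cBR G1 G2 G j1 t1 p1 s1 j2 t2 p2 s2 :
    construction G1 j1 t1 p1 s1 -> construction G2 j2 t2 p2 s2 ->
    bridge G1 G2 G -> construction G (j1 + j2).+1 (t1 + t2) (p1 + p2) (s1 + s2)
| cSP1 H G j t p s : construction H j t p s -> spoke true H G ->
    construction G j t p.+1 s
| cSP2 H G j t p s : construction H j t p s -> spoke false H G ->
    construction G j t p s.+1.

Definition ceil_div (a b : nat) : nat := (a + b.-1) %/ b.

Definition extremal (G : sgraph) : Prop :=
  uniformly_connected 3 G /\ nu G = ceil_div (2 * gn G + 2) 3.

(* Along a construction the vertex count is n = 4 + 2j + 2t + p + s (each of the j + 1 copies
   of K4 brings 4 vertices, each bridge deletes 2, each edge join adds 2 and each spoke 1), the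
   minimum degree stays 3, and exactly p vertices have degree > 3, where p <= j + 1: edge joins
   and primary spokes are applied to cubic graphs, a primary spoke creates a single vertex of
   degree 4, a secondary spoke only raises the degree of the unique such vertex, and a bridge
   keeps every degree except those of the two deleted cubic vertices. Hence nu(G) = n - p, so
   extremality gives p = n - ceil((2n+2)/3) = k - 1, and the vertex count together with
   j >= p - 1 = k - 2 leaves only the listed values of j, t and s. *)

From mathcomp Require Import all_boot all_order all_algebra.
From mathcomp Require Import zify.
Set Implicit Arguments. Unset Strict Implicit. Unset Printing Implicit Defensive.

Lemma sum_indicator (T : finType) (P : pred T) : \sum_(x : T) (P x : nat) = #|P|.
Proof.
rewrite -sum1_card [RHS]big_mkcond; apply: eq_bigr => x _.
by rewrite unfold_in; case: (P x).
Qed.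

Lemma sum_eq_indicator (T : finType) (c : T) : \sum_(x : T) (x == c : nat) = 1.
Proof. by rewrite sum_indicator card1. Qed.

Lemma sum_setC1 (T : finType) (c : T) (F : T -> nat) :
  \sum_(x : T) F x = F c + \sum_(x in [set~ c]) F x.
Proof. by rewrite (bigD1 c) //=; congr (_ + _); apply: eq_bigl => x; rewrite in_setC1. Qed.

Section Partition.

Variables (U T1 T2 : finType) (A : {set T1}) (B : {set T2}).

Definition partition_by (f1 : T1 -> U) (f2 : T2 -> U) : Prop :=
  [/\ {in A &, injective f1}, {in B &, injective f2},
      forall a b, a \in A -> b \in B -> f1 a != f2 b & #|U| = #|A| + #|B|].

Variables (f1 : T1 -> U) (f2 : T2 -> U).
Hypothesis f12 : partition_by f1 f2.

Lemma partition_by_disjoint : [disjoint f1 @: A & f2 @: B].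
Proof.
case: f12 => _ _ f1_neq_f2 _; apply/pred0P => u /=.
apply/negP => /andP [/imsetP [a Aa ->] /imsetP [b Bb /eqP]].
by rewrite (negbTE (f1_neq_f2 a b Aa Bb)).
Qed.

Lemma partition_by_cover : f1 @: A :|: f2 @: B = [set: U].
Proof.
case: f12 => f1_inj f2_inj _ card_U; apply/eqP; rewrite eqEcard subsetT cardsT cardsU.
by rewrite !card_in_imset // (disjoint_setI0 partition_by_disjoint) cards0 subn0 card_U leqnn.
Qed.

Lemma partition_by_sum (F : U -> nat) :
  \sum_(u : U) F u = \sum_(a in A) F (f1 a) + \sum_(b in B) F (f2 b).
Proof.
case: f12 => f1_inj f2_inj _ _.
rewrite -(big_imset F f1_inj) -(big_imset F f2_inj) -bigU ?partition_by_disjoint //=.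
by apply: eq_bigl => u; rewrite inE -in_setU partition_by_cover inE.
Qed.

Lemma partition_by_cases (u : U) :
  (exists2 a, a \in A & u = f1 a) \/ (exists2 b, b \in B & u = f2 b).
Proof.
have : u \in f1 @: A :|: f2 @: B by rewrite partition_by_cover inE.
by case/setUP => /imsetP [x x_in ->]; [left | right]; exists x.
Qed.

End Partition.

Lemma partition_byC (U T1 T2 : finType) (A : {set T1}) (B : {set T2})
    (f1 : T1 -> U) (f2 : T2 -> U) :
  partition_by A B f1 f2 -> partition_by B A f2 f1.
Proof.
case=> f1_inj f2_inj f1_neq_f2 card_U; split; rewrite 1?addnC //.
by move=> b a Bb Aa; rewrite eq_sym f1_neq_f2.
Qed.

Lemma degE (G : sgraph) (v : vert G) : deg v = \sum_(w : vert G) (gadj G v w : nat).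
Proof. by rewrite sum_indicator; apply: eq_card => w; rewrite inE. Qed.

Lemma adj_neq (G : sgraph) (a b : vert G) : gadj G a b -> a != b.
Proof. by apply: contraTneq => ->; rewrite girr. Qed.

Lemma same_edgeC (T : eqType) (a b c d : T) : same_edge a b c d = same_edge c d a b.
Proof. by rewrite /same_edge (eq_sym c) (eq_sym d) (eq_sym c b) (eq_sym d a) (andbC (b == c)). Qed.

Lemma same_edge_swap (T : eqType) (a b c d : T) : same_edge a b c d = same_edge b a c d.
Proof. by rewrite /same_edge orbC (andbC (b == c)) (andbC (b == d)). Qed.

Lemma same_edge_adj (G : sgraph) (a b s t : vert G) :
  gadj G s t -> same_edge a b s t -> gadj G a b.
Proof. by move=> st /orP [] /andP [/eqP -> /eqP ->] //; rewrite gsym. Qed.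

Lemma sum_same_edge (T : finType) (a s t : T) : s != t ->
  \sum_(b : T) (same_edge a b s t : nat) = (a == s) || (a == t).
Proof.
move=> st; have [-> | a_neq_s] := eqVneq a s.
  rewrite /= -(sum_eq_indicator t); apply: eq_bigr => b _.
  by rewrite /same_edge eqxx (negbTE st) orbF.
have [-> | a_neq_t] := eqVneq a t.
  rewrite orbT /= -(sum_eq_indicator s); apply: eq_bigr => b _.
  by rewrite /same_edge eqxx (eq_sym t) (negbTE st).
by rewrite big1 // => b _; rewrite /same_edge (negbTE a_neq_s) (negbTE a_neq_t).
Qed.

Section RemoveEdge.

Variables (G : sgraph) (s t : vert G).

Definition remove_edge_adj : rel (vert G) := fun a b => gadj G a b && ~~ same_edge a b s t.

Lemma remove_edge_sym : symmetric remove_edge_adj.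
Proof. by move=> a b; rewrite /remove_edge_adj gsym same_edge_swap. Qed.

Lemma remove_edge_irr : irreflexive remove_edge_adj.
Proof. by move=> a; rewrite /remove_edge_adj girr. Qed.

Definition remove_edge : sgraph := SGraph remove_edge_sym remove_edge_irr.

Lemma deg_remove_edge (a : vert G) : gadj G s t ->
  @deg remove_edge a + ((a == s) || (a == t)) = deg a.
Proof.
move=> st; rewrite !degE -(sum_same_edge a (adj_neq st)) -big_split /=.
apply: eq_bigr => b _; rewrite /remove_edge_adj; have := same_edge_adj (a := a) (b := b) st.
by case: (same_edge a b s t) => [/(_ isT) -> | _]; rewrite ?andbT ?andbF ?addn0.
Qed.

End RemoveEdge.

Lemma in_rcons_nat (T : eqType) (s : seq T) (x a : T) : x \notin s ->
  (a \in rcons s x : nat) = (a \in s) + (a == x).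
Proof.
move=> xs; rewrite mem_rcons inE; have [-> | _] := eqVneq a x.
  by rewrite (negbTE xs).
by rewrite addn0.
Qed.

Lemma sum_in_uniq (T : finType) (s : seq T) : uniq s -> \sum_(a : T) (a \in s : nat) = size s.
Proof. by rewrite sum_indicator => /card_uniqP. Qed.

Section Extension.

Variables (H G : sgraph) (f : vert H -> vert G) (X : {set vert G}).

Definition extension : Prop :=
  [/\ injective f, forall a, f a \notin X & gn G = gn H + #|X|].

Hypothesis fX : extension.

Lemma extension_partition : partition_by [set: vert H] X f id.
Proof.
case: fX => f_inj f_X card_G; split => //.
- by move=> a b _ _ /f_inj.
- by move=> a b _ Xb /=; apply: contraNneq (f_X a) => ->.
- by rewrite cardsT !card_ord.
Qed.

Lemma extension_sum (F : vert G -> nat) :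
  \sum_(u : vert G) F u = \sum_(a : vert H) F (f a) + \sum_(u in X) F u.
Proof.
rewrite (partition_by_sum extension_partition); congr (_ + _).
by apply: eq_bigl => a; rewrite inE.
Qed.

Lemma extension_cases (u : vert G) : (exists a, u = f a) \/ u \in X.
Proof.
case: (partition_by_cases extension_partition u) => [[a _ ->] | [b Xb ->]].
  by left; exists a.
by right.
Qed.

Lemma deg_extension (a : vert H) :
  deg (f a) = \sum_(b : vert H) (gadj G (f a) (f b) : nat) + \sum_(u in X) (gadj G (f a) u : nat).
Proof. by rewrite degE extension_sum. Qed.

End Extension.

Definition noncubic (G : sgraph) : {set vert G} := [set v | deg v != 3].

Lemma card_noncubic (G : sgraph) : #|noncubic G| = \sum_(v : vert G) (deg v != 3 : nat).
Proof. by rewrite sum_indicator; apply: eq_card => v; rewrite inE. Qed.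

Lemma cubic_noncubic (G : sgraph) : cubic G -> #|noncubic G| = 0.
Proof.
by move=> cubic_G; apply/eqP; rewrite cards_eq0; apply/eqP/setP => v; rewrite !inE cubic_G.
Qed.

Lemma complete4_cubic (G : sgraph) : complete4 G -> cubic G.
Proof.
case=> n4 adj v; rewrite /deg (_ : [set w | gadj G v w] = [set~ v]) ?cardsC1 ?card_ord ?n4 //.
by apply/setP => w; rewrite !inE; have [-> | wv] := eqVneq w v; rewrite ?girr ?adj // eq_sym.
Qed.

Lemma spoke_degrees (primary : bool) (H G : sgraph) : spoke primary H G ->
  exists (f : vert H -> vert G) (y : vert G) (x : vert H),
    [/\ extension f [set y], deg y = 3, forall a, deg (f a) = deg a + (a == x),
        forall a, a != x -> deg a = 3 & if primary then deg x == 3 else 3 < deg x].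
Proof.
case=> v [w [x [[uq vw deg3 deg_x card_G] [f [y [f_inj f_y adj_f adj_y]]]]]].
have ext : extension f [set y].
  by split=> // [a | ]; rewrite ?in_set1 ?f_y // cards1.
exists f, y, x; split=> //.
  rewrite degE (extension_sum ext) big_set1 girr addn0.
  under eq_bigr do rewrite adj_y.
  exact: sum_in_uniq.
have x_vw : x \notin [:: v; w].
  by move: uq; rewrite -[[:: v; w; x]]/(rcons [:: v; w] x) rcons_uniq => /andP [].
move=> a; rewrite (deg_extension ext) big_set1 gsym adj_y.
rewrite -[[:: v; w; x]]/(rcons [:: v; w] x) in_rcons_nat // !inE.
rewrite -(deg_remove_edge _ vw) addnA; congr (_ + _ + _); rewrite degE.
by apply: eq_bigr => b _; rewrite adj_f.
Qed.

Lemma spoke_noncubic (primary : bool) (H G : sgraph) : spoke primary H G ->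
  [/\ gn G = gn H + 1, forall u : vert G, 3 <= deg u,
      #|noncubic G| = 1 & #|noncubic H| = ~~ primary].
Proof.
move=> /spoke_degrees [f [y [x [ext deg_y deg_f deg3 deg_x]]]].
have [f_inj f_y card_G] := ext; rewrite cards1 in card_G.
have deg_x3 : 3 <= deg x by case: primary deg_x => /= [/eqP -> | /ltnW].
split=> //.
- move=> u; case: (extension_cases ext u) => [[a ->] | /set1P ->]; last by rewrite deg_y.
  rewrite deg_f; have [-> | ax] := eqVneq a x; last by rewrite deg3.
  exact: leq_trans deg_x3 (leq_addr _ _).
- have -> : noncubic G = [set f x].
    apply/setP => u; rewrite !inE; case: (extension_cases ext u) => [[a ->] | /set1P ->].
      rewrite deg_f (inj_eq f_inj); have [-> | ax] := eqVneq a x; last by rewrite deg3.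
      by rewrite addn1 gtn_eqF.
    by rewrite deg_y; move: (f_y x); rewrite inE eq_sym => /negbTE ->.
  exact: cards1.
- have -> : noncubic H = if primary then set0 else [set x].
    apply/setP => a; rewrite inE; have [-> | ax] := eqVneq a x.
      by case: primary deg_x => /= [/eqP -> | /gtn_eqF ->]; rewrite ?inE ?eqxx.
    by rewrite deg3 //; case: primary deg_x => _; rewrite ?inE ?(negbTE ax).
  by case: primary deg_x => _; rewrite ?cards0 ?cards1.
Qed.

Lemma edge_join_cubic (H G : sgraph) : edge_join H G -> cubic H ->
  cubic G /\ gn G = gn H + 2.
Proof.
case=> s [t [v [w [[st vw nse card_G] [f [x [y [[f_inj xy f_xy adj_f] adj_new]]]]]]]].
case: adj_new => adj_x adj_y adj_xy cubic_H; split=> //.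
have ext : extension f [set x; y].
  split=> // [a | ]; last by rewrite cards2 xy card_G.
  by rewrite !inE negb_or; case: (f_xy a) => -> ->.
have sum_xy (F : vert G -> nat) : \sum_(u in [set x; y]) F u = F x + F y.
  by rewrite big_setU1 ?inE // big_set1.
have vw_st : @gadj (remove_edge s t) v w.
  by rewrite /= /remove_edge_adj vw same_edgeC nse.
move=> u; case: (extension_cases ext u) => [[a ->] | ].
  rewrite (deg_extension ext) sum_xy !(@gsym G (f a)) adj_x adj_y -(cubic_H a).
  rewrite -(deg_remove_edge _ st) -(deg_remove_edge _ vw_st) [RHS]addnAC addnA.
  congr (_ + _ + _); rewrite degE; apply: eq_bigr => b _.
  by rewrite adj_f /= /remove_edge_adj andbA.
have sum_pair (a b : vert H) : a != b -> \sum_(c : vert H) ((c == a) || (c == b) : nat) = 2.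
  by move=> ab; under eq_bigr do rewrite -mem_seq2; rewrite sum_in_uniq //= inE ab.
rewrite !inE => /orP [] /eqP ->; rewrite degE (extension_sum ext) sum_xy girr.
  by under eq_bigr do rewrite adj_x; rewrite sum_pair ?adj_xy ?adj_neq.
by under eq_bigr do rewrite adj_y; rewrite sum_pair ?(gsym y) ?adj_xy ?adj_neq.
Qed.

Lemma sum_matching3 (T1 T2 : finType) (x1 y1 z1 : T1) (x2 y2 z2 : T2) (a : T1) :
  uniq [:: x1; y1; z1] ->
  \sum_(b : T2) ([|| (a == x1) && (b == x2), (a == y1) && (b == y2) | (a == z1) && (b == z2)] : nat)
    = (a \in [:: x1; y1; z1]).
Proof.
rewrite /= !inE !negb_or andbT => /andP [/andP [xy xz] yz].
have [-> | ax] := eqVneq a x1.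
  rewrite /= -(sum_eq_indicator x2); apply: eq_bigr => b _.
  by rewrite (negbTE xy) (negbTE xz) !orbF.
have [-> | ay] := eqVneq a y1.
  by rewrite /= -(sum_eq_indicator y2); apply: eq_bigr => b _; rewrite (negbTE yz) !orbF.
have [_ | az] := eqVneq a z1; first by rewrite /= -(sum_eq_indicator z2).
by rewrite big1.
Qed.

Section BridgeSide.

Variables (G1 G2 G : sgraph) (v1 x1 y1 z1 : vert G1) (v2 x2 y2 z2 : vert G2).
Variables (f1 : vert G1 -> vert G) (f2 : vert G2 -> vert G).
Hypothesis uniq1 : uniq [:: x1; y1; z1].
Hypothesis adj_v1 : forall a, gadj G1 v1 a = (a \in [:: x1; y1; z1]).
Hypothesis adj_v2 : forall b, gadj G2 v2 b = (b \in [:: x2; y2; z2]).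
Hypothesis f12 : partition_by [set~ v1] [set~ v2] f1 f2.
Hypothesis adj_f1 : forall a a', a != v1 -> a' != v1 -> gadj G (f1 a) (f1 a') = gadj G1 a a'.
Hypothesis adj_f12 : forall a b, a != v1 -> b != v2 ->
  gadj G (f1 a) (f2 b) =
    [|| (a == x1) && (b == x2), (a == y1) && (b == y2) | (a == z1) && (b == z2)].

Lemma deg_bridge_vertex : deg v1 = 3.
Proof. by rewrite degE; under eq_bigr do rewrite adj_v1; exact: sum_in_uniq. Qed.

Lemma deg_bridge (a : vert G1) : a != v1 -> deg (f1 a) = deg a.
Proof.
move=> av1; rewrite degE (partition_by_sum f12) [RHS]degE (sum_setC1 v1) [RHS]addnC gsym adj_v1.
congr (_ + _); first by apply: eq_bigr => a'; rewrite in_setC1 => a'v1; rewrite adj_f1.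
have : v2 \notin [:: x2; y2; z2] by rewrite -adj_v2 girr.
rewrite -(sum_matching3 x2 y2 z2 a uniq1) (sum_setC1 v2) !inE !negb_or => /and3P [v2x2 v2y2 v2z2].
rewrite (negbTE v2x2) (negbTE v2y2) (negbTE v2z2) !andbF /=.
by apply: eq_bigr => b; rewrite in_setC1 => bv2; rewrite adj_f12.
Qed.

End BridgeSide.

Lemma bridge_noncubic (G1 G2 G : sgraph) : bridge G1 G2 G ->
  (forall a : vert G1, 3 <= deg a) -> (forall b : vert G2, 3 <= deg b) ->
  [/\ gn G + 2 = gn G1 + gn G2, forall u : vert G, 3 <= deg u
    & #|noncubic G| = #|noncubic G1| + #|noncubic G2|].
Proof.
case=> v1 [x1 [y1 [z1 [v2 [x2 [y2 [z2 [[uniq1 adj_v1 uniq2 adj_v2 card_G]]]]]]]]].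
case=> f1 [f2 [[inj1 inj2 f1_neq_f2] [adj_f1 adj_f2 adj_f12]]] deg_G1 deg_G2.
have f12 : partition_by [set~ v1] [set~ v2] f1 f2.
  split.
  - by move=> a a'; rewrite !in_setC1; exact: inj1.
  - by move=> b b'; rewrite !in_setC1; exact: inj2.
  - by move=> a b; rewrite !in_setC1; exact: f1_neq_f2.
  - by rewrite !cardsC1 !card_ord; move: (ltn_ord v1) (ltn_ord v2); lia.
have adj_f21 b a : b != v2 -> a != v1 ->
    gadj G (f2 b) (f1 a) =
      [|| (b == x2) && (a == x1), (b == y2) && (a == y1) | (b == z2) && (a == z1)].
  by move=> bv2 av1; rewrite gsym adj_f12 // (andbC (a == x1)) (andbC (a == y1)) (andbC (a == z1)).
have deg_f1 := deg_bridge uniq1 adj_v1 adj_v2 f12 adj_f1 adj_f12.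
have deg_f2 := deg_bridge uniq2 adj_v2 adj_v1 (partition_byC f12) adj_f2 adj_f21.
split => //.
- move=> u; case: (partition_by_cases f12 u) => [[a] | [b]]; rewrite in_setC1 => ne ->.
    by rewrite deg_f1.
  by rewrite deg_f2.
- rewrite !card_noncubic (partition_by_sum f12) (sum_setC1 v1).
  rewrite (sum_setC1 v2 (fun b => deg b != 3 : nat)).
  rewrite (deg_bridge_vertex uniq1 adj_v1) (deg_bridge_vertex uniq2 adj_v2) /=.
  congr (_ + _); apply: eq_bigr => ?; rewrite in_setC1 => ne; by rewrite ?deg_f1 ?deg_f2.
Qed.

Definition construction_invariant (G : sgraph) (j t p s : nat) : Prop :=
  [/\ gn G = 4 + 2 * j + 2 * t + p + s, forall v : vert G, 3 <= deg v,
      #|noncubic G| = p & p <= j.+1].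

Lemma construction_invariantP (G : sgraph) (j t p s : nat) :
  construction G j t p s -> construction_invariant G j t p s.
Proof.
elim=> {G j t p s}.
- move=> G K4; have cubic_G := complete4_cubic K4; case: K4 => n4 _.
  by split; rewrite ?cubic_noncubic // => v; rewrite cubic_G.
- move=> H G j t p s _ [nH _ pH _] cubic_H _ ej; have [cubic_G nG] := edge_join_cubic ej cubic_H.
  have p0 : p = 0 by rewrite -pH cubic_noncubic.
  split; rewrite ?cubic_noncubic ?p0 //; first by lia.
  by move=> v; rewrite cubic_G.
- move=> G1 G2 G j1 t1 p1 s1 j2 t2 p2 s2 _ [n1 d1 q1 l1] _ [n2 d2 q2 l2] br.
  have [nG dG qG] := bridge_noncubic br d1 d2.
  by split => //; [lia | rewrite qG q1 q2 | lia].
- move=> H G j t p s _ [nH _ pH _] sp; have [nG dG qG qH] := spoke_noncubic sp.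
  by split => //; lia.
- move=> H G j t p s _ [nH _ pH pj] sp; have [nG dG qG qH] := spoke_noncubic sp.
  by split => //; lia.
Qed.

Lemma nu_add_noncubic (G : sgraph) : (forall v : vert G, 3 <= deg v) ->
  #|noncubic G| < gn G -> nu G + #|noncubic G| = gn G.
Proof.
move=> deg3 lt_n; rewrite /nu.
have /card_gt0P [w0] : 0 < #|~: noncubic G| by move: (cardsC (noncubic G)); rewrite card_ord; lia.
rewrite !inE negbK => /eqP deg_w0.
have -> : [set v : vert G | [forall w : vert G, deg v <= deg w]] = ~: noncubic G.
  apply/setP => v; rewrite !inE negbK; apply/forallP/eqP => [min_v | -> w]; last exact: deg3.
  by have := min_v w0; have := deg3 v; rewrite deg_w0; lia.
by rewrite addnC cardsC card_ord.
Qed.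

Lemma order_mod3 (n k : nat) (l : int) : l \in [:: (-1)%R; 0%R; 1%R] ->
  (n%:Z = 3%:Z * k%:Z + l)%R ->
  [\/ l = (-1)%R /\ n.+1 = 3 * k, l = 0%R /\ n = 3 * k | l = 1%R /\ n = (3 * k).+1].
Proof.
by rewrite !inE => /or3P [] /eqP -> n_eq; [constructor 1 | constructor 2 | constructor 3]; lia.
Qed.

Theorem theorem16 (G : sgraph) (k : nat) (l : int) (j t p s : nat) :
  k != 1 -> l \in [:: (-1)%R; 0%R; 1%R] ->
  ((gn G)%:Z = 3%:Z * k%:Z + l)%R -> 5 <= gn G ->
  extremal G ->
  construction G j t p s ->
  [/\ p = k - 1,
      l = (-1)%R -> [/\ j = k - 2, t = 0 & s = 0],
      l = 0%R -> [/\ j = k - 2, t = 0 & s = 1] &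
      l = 1%R ->
        [/\ j = k - 1, t = 0 & s = 0] \/ [/\ j = k - 2, t = 1 & s = 0] \/
        [/\ j = k - 2, t = 0 & s = 2]].
Proof.
(* Only the value of nu(G) is used from extremality, and k != 1 already follows from 5 <= n. *)
move=> _ l3 n_kl n5 [_ nu_G] /construction_invariantP [n_jtps deg3 noncubic_p p_le].
rewrite /ceil_div /= in nu_G.
have nu_n : (2 * gn G + 2 + 2) %/ 3 + p = gn G.
  by rewrite -nu_G -noncubic_p nu_add_noncubic // noncubic_p n_jtps; lia.
have [[-> n_k] | [-> n_k] | [-> n_k]] := order_mod3 l3 n_kl;
  split=> [| l_eq | l_eq | l_eq]; try by [lia | split; lia].
have [[? [? ?]] | [[? [? ?]] | [? [? ?]]]] :
    (j = k - 1 /\ t = 0 /\ s = 0) \/ (j = k - 2 /\ t = 1 /\ s = 0) \/ (j = k - 2 /\ t = 0 /\ s = 2)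
  by lia.
- by left.
- by right; left.
- by right; right.
Qed.
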